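(* Let $n\in\mathbb{N}$ with $n\ge2$, $S:=\{0,\dots,n-1\}$, and let $C\subseteq\operatorname{codes}(S)$ be a fundamental set. Then the map $\mathbf G:(0,\infty)^S\to\mathbb{R}^C$, $\mathbf G(\rho):=(\alpha(x)|_\rho)_{x\in C}$, is injective when restricted to the set $\{\tau\in(0,\infty)^S:\tau(n-1)=1\}$.
   Context: A coronal code over $S$ of length $m$ is a formal string $x=c:p_0p_1\dots p_{m-1}$ with $c,p_i\in S$; $\operatorname{center}(x)=c$, $\operatorname{petals}(x)=\{p_0,\dots,p_{m-1}\}$; codes are identified up to rotation/reversal of the petal string, giving $\operatorname{codes}(S)$. For $a,b,c\in S$ (indeterminates), $c^a_b:=\arccos\!\Big(\frac{(c+a)^2+(c+b)^2-(a+b)^2}{2(c+a)(c+b)}\Big)$, and $\alpha(x):=\sum_{i=0}^{m-1} c^{p_i}_{p_{i+1\bmod m}}$. For $\rho\in(0,\infty)^S$, $\alpha(x)|_\rho$ is the value obtained by substituting $\rho(s)$ for each symbol $s$. A nonempty $C\subseteq\operatorname{codes}(S)$ is fundamental if $\{\operatorname{center}(x):x\in C\}=\{0,\dots,n-2\}$ and for every nonempty $K\subseteq\{0,\dots,n-2\}$ there is $D\subseteq C$ with $\{\operatorname{center}(x):x\in D\}=K$ and $\big(\bigcup_{x\in D}\operatorname{petals}(x)\big)\setminus K\ne\emptyset$. *)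

From Stdlib Require Import Reals.
From mathcomp Require Import all_boot.
Set Implicit Arguments.
Unset Strict Implicit.
Unset Printing Implicit Defensive.

(* Codes are identified up to rotation/reversal of the petal
   string; all notions below (center, petal set, alpha) are invariant under
   these operations, so we work with raw representatives. *)
Record code (n : nat) := Code { center : 'I_n ; petal_seq : seq 'I_n }.

Definition petals n (x : code n) (s : 'I_n) : Prop := s \in petal_seq x.

Definition cangle (c a b : R) : R :=
  acos (Rdiv (Rminus (Rplus (pow (Rplus c a) 2) (pow (Rplus c b) 2)) (pow (Rplus a b) 2))
             (Rmult (Rmult (IZR 2) (Rplus c a)) (Rplus c b))).

Definition alpha n (rho : 'I_n -> R) (x : code n) : R :=
  let m := size (petal_seq x) in
  let c := center x in
  \big[Rplus/R0]_(0 <= i < m)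
     cangle (rho c) (rho (nth c (petal_seq x) i))
            (rho (nth c (petal_seq x) ((i.+1) %% m))).

(* Codes have length m >= 1 (the formula uses indices mod m). *)
Definition is_code n (x : code n) : Prop := (0 < size (petal_seq x))%N.

Definition fundamental n (C : code n -> Prop) : Prop :=
  (exists x, C x) /\
  (forall x, C x -> is_code x) /\
  (forall k : 'I_n, (exists x, C x /\ center x = k) <-> (k < n.-1)%N) /\
  (forall K : 'I_n -> Prop,
     (exists k, K k) -> (forall k, K k -> (k < n.-1)%N) ->
     exists D : code n -> Prop,
       (forall x, D x -> C x) /\
       (forall k, (exists x, D x /\ center x = k) <-> K k) /\
       (exists s, (exists x, D x /\ petals x s) /\ ~ K s)).

From Stdlib Require Import Reals Lra Psatz FunctionalExtensionality.
From mathcomp Require Import all_boot zify.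
Set Implicit Arguments.
Unset Strict Implicit.
Open Scope R_scope.

(* Suppose rho and tau both solve the system and let lam be the largest ratio
   rho s / tau s.  If lam > 1, the set K of labels where the ratio is lam does
   not contain n-1, so by fundamentality some code x has its center in K and a
   petal outside K.  Angles are invariant under scaling all three radii and
   increase strictly with the petal radii, so comparing rho with lam * tau
   gives alpha rho x < alpha (lam * tau) x = alpha tau x, a contradiction.
   Hence rho <= tau, and tau <= rho by symmetry. *)

Lemma acos_lt x y : -1 <= x <= 1 -> -1 <= y <= 1 -> x < y -> acos y < acos x.
Proof.
move=> Hx Hy Hxy.
have := acos_bound x; have := acos_bound y => By Bx.
apply: cos_decreasing_0; try lra.
by rewrite !cos_acos; lra.
Qed.

Lemma acos_le x y : -1 <= x <= 1 -> -1 <= y <= 1 -> x <= y -> acos y <= acos x.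
Proof.
move=> Hx Hy [Hxy | ->]; last lra.
by apply/Rlt_le/acos_lt.
Qed.

Lemma ratio_bounds c a : 0 < c -> 0 < a -> 0 < a / (c + a) < 1.
Proof.
move=> Hc Ha; split; first by apply: Rdiv_lt_0_compat; lra.
apply/(Rmult_lt_reg_r (c + a)); first lra.
by rewrite /Rdiv Rmult_assoc Rinv_l; lra.
Qed.

Lemma ratio_lt c a a' : 0 < c -> 0 < a -> a < a' -> a / (c + a) < a' / (c + a').
Proof.
move=> Hc Ha Haa'.
apply/Rlt_0_minus.
have -> : a' / (c + a') - a / (c + a) = c * (a' - a) / ((c + a) * (c + a'))
  by field; lra.
by apply: Rdiv_lt_0_compat; nra.
Qed.

Lemma ratio_le c a a' : 0 < c -> 0 < a -> a <= a' -> a / (c + a) <= a' / (c + a').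
Proof. by move=> Hc Ha [Haa' | ->]; [apply/Rlt_le/ratio_lt | lra]. Qed.

(* This factorization makes the monotonicity in each petal radius evident. *)
Lemma cangleE c a b : 0 < c -> 0 < a -> 0 < b ->
  cangle c a b = acos (1 - 2 * (a / (c + a) * (b / (c + b)))).
Proof. by move=> Hc Ha Hb; rewrite /cangle; f_equal; field; lra. Qed.

Lemma cangle_scale l c a b : 0 < l -> 0 < c -> 0 < a -> 0 < b ->
  cangle (l * c) (l * a) (l * b) = cangle c a b.
Proof.
move=> Hl Hc Ha Hb.
rewrite !cangleE; try nra.
by f_equal; field; repeat split; nra.
Qed.

Lemma cangle_lt c a b a' b' : 0 < c -> 0 < a -> 0 < b ->
  a < a' -> b <= b' -> cangle c a b < cangle c a' b'.
Proof.
move=> Hc Ha Hb Haa' Hbb'.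
have Ha' : 0 < a' by lra.
have Hb' : 0 < b' by lra.
rewrite !cangleE //.
have := ratio_bounds Hc Ha; have := ratio_bounds Hc Hb.
have := ratio_bounds Hc Ha'; have := ratio_bounds Hc Hb'.
have := ratio_lt Hc Ha Haa'; have := ratio_le Hc Hb Hbb'.
move=> *; apply: acos_lt; nra.
Qed.

Lemma cangle_le c a b a' b' : 0 < c -> 0 < a -> 0 < b ->
  a <= a' -> b <= b' -> cangle c a b <= cangle c a' b'.
Proof.
move=> Hc Ha Hb [Haa' | <-] Hbb'; first by move=> *; apply/Rlt_le/cangle_lt.
have Hb' : 0 < b' by lra.
rewrite !cangleE //.
have := ratio_bounds Hc Ha; have := ratio_bounds Hc Hb.
have := ratio_bounds Hc Hb'; have := ratio_le Hc Hb Hbb'.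
move=> *; apply: acos_le; nra.
Qed.

Lemma big_Rplus_le (I : Type) (r : seq I) (F G : I -> R) :
  (forall i, F i <= G i) ->
  \big[Rplus/R0]_(i <- r) F i <= \big[Rplus/R0]_(i <- r) G i.
Proof.
move=> HFG; apply: (big_ind2 Rle); [lra | move=> *; lra | by move=> i _].
Qed.

Lemma big_Rplus_lt (I : eqType) (r : seq I) (F G : I -> R) i0 :
  (forall i, F i <= G i) -> i0 \in r -> F i0 < G i0 ->
  \big[Rplus/R0]_(i <- r) F i < \big[Rplus/R0]_(i <- r) G i.
Proof.
move=> HFG + Hi0; elim: r => [|j r IH] //.
rewrite in_cons !big_cons => /orP [/eqP <- | Hr].
- by have := big_Rplus_le r HFG; lra.
- by have := HFG j; have := IH Hr; lra.
Qed.

Lemma seq_argmax (T : eqType) (f : T -> R) (t0 : T) (s : seq T) :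
  exists x, forall y, y \in s -> f y <= f x.
Proof.
elim: s => [|a s [x Hmax]]; first by exists t0.
case: (Rle_or_lt (f a) (f x)) => Hax.
- by exists x => y; rewrite inE => /orP [/eqP -> // | /Hmax].
- by exists a => y; rewrite inE => /orP [/eqP -> | /Hmax]; lra.
Qed.

Lemma fintype_argmax (T : finType) (f : T -> R) (t0 : T) :
  exists x, forall y, f y <= f x.
Proof.
have [x Hmax] := seq_argmax f t0 (enum T).
by exists x => y; apply: Hmax; rewrite mem_enum.
Qed.

Section Alpha.

Variable n : nat.

Lemma alpha_scale l (rho : 'I_n -> R) (x : code n) :
  0 < l -> (forall s, 0 < rho s) ->
  alpha (fun s => l * rho s) x = alpha rho x.
Proof. by move=> Hl Hrho; apply: eq_bigr => i _; apply: cangle_scale. Qed.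

Lemma alpha_lt (rho sigma : 'I_n -> R) (x : code n) s :
  (forall s, 0 < rho s) -> (forall s, rho s <= sigma s) ->
  rho (center x) = sigma (center x) -> petals x s -> rho s < sigma s ->
  alpha rho x < alpha sigma x.
Proof.
rewrite /petals => Hrho Hle Hc Hs Hlt.
rewrite /alpha -Hc.
apply: (big_Rplus_lt (i0 := index s (petal_seq x))) => [i||].
- by apply: cangle_le.
- by rewrite mem_index_iota index_mem.
- by apply: cangle_lt; rewrite ?nth_index.
Qed.

Lemma fundamental_alpha_le (C : code n -> Prop) (rho tau : 'I_n -> R) :
  fundamental C ->
  (forall s, 0 < rho s) -> (forall s, 0 < tau s) ->
  (forall s : 'I_n, nat_of_ord s = n.-1 -> rho s = tau s) ->
  (forall x, C x -> alpha rho x = alpha tau x) ->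
  forall s, rho s <= tau s.
Proof.
move=> [_ [_ [_ Hfund]]] Hrho Htau Hlast Heq s.
apply: Rnot_lt_le => Hs.
pose q k := rho k / tau k.
have Hq k : rho k = q k * tau k by rewrite /q; field; have := Htau k; lra.
have [xm Hmax] := fintype_argmax q s.
set lam := q xm in Hmax.
have Hdom k : rho k <= lam * tau k.
  by rewrite Hq; have := Hmax k; have := Htau k; nra.
have Hlam : 1 < lam.
  by move: Hs; rewrite Hq; have := Hmax s; have := Htau s; nra.
pose K k := rho k = lam * tau k.
have HKxm : K xm := Hq xm.
have HKbelow k : K k -> (k < n.-1)%N.
  have := ltn_ord k; case: (nat_of_ord k =P n.-1) => [Ek | Nk] ? HKk; last lia.
  by move: HKk; rewrite /K Hlast //; have := Htau k; nra.
have [D [HDC [HDK [p [[x [Dx Hp]] HKp]]]]] := Hfund K (ex_intro _ xm HKxm) HKbelow.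
have Hc : K (center x) by apply/HDK; exists x.
have Hx := HDC x Dx.
have Hp_lt : rho p < lam * tau p by case: (Hdom p) => // /HKp.
have := alpha_lt Hrho Hdom Hc Hp Hp_lt.
rewrite alpha_scale ?Heq //; [exact: Rlt_irrefl | lra].
Qed.

End Alpha.

Theorem theorem4p2 (n : nat) (C : code n -> Prop) :
  (2 <= n)%N ->
  fundamental C ->
  forall rho tau : 'I_n -> R,
    (forall s, Rlt R0 (rho s)) -> (forall s, Rlt R0 (tau s)) ->
    (forall s : 'I_n, nat_of_ord s = n.-1 -> rho s = R1) ->
    (forall s : 'I_n, nat_of_ord s = n.-1 -> tau s = R1) ->
    (forall x, C x -> alpha rho x = alpha tau x) ->
    rho = tau.
Proof.
(* [2 <= n] is implied by [fundamental C], whose codes have centers below n.-1. *)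
move=> _ HC rho tau Hrho Htau Hrho1 Htau1 Heq.
have Hlast (s : 'I_n) : nat_of_ord s = n.-1 -> rho s = tau s.
  by move=> Hs; rewrite Hrho1 // Htau1.
apply: functional_extensionality => s; apply: Rle_antisym.
- exact: (fundamental_alpha_le HC Hrho Htau Hlast Heq).
- by apply: (fundamental_alpha_le HC Htau Hrho) => [t /Hlast | x /Heq] ->.
Qed.
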